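(* For all $n\ge1$, in $\mathcal Z^{\mathfrak f}$: $\zeta^{\mathfrak f}((x_0x_1)^nx_0)=-2\sum_{i=0}^{n-1}\zeta^{\mathfrak f}(\{2\}^i,3,\{2\}^{n-1-i})=2\sum_{i=1}^n(-1)^i\zeta^{\mathfrak f}(2i+1)\,\zeta^{\mathfrak f}(\{2\}^{n-i})$.
   Context: Formal MZVs: $\mathcal X=\{x_0,x_1\}$, $\mathbb Q\langle\mathcal X\rangle$ free noncommutative polynomials, $ш$ shuffle product ($\mathbf1шw=wш\mathbf1=w$, $auшbv=a(uшbv)+b(auшv)$). $\mathcal Z^{\mathfrak f}=(\mathbb Q\langle\mathcal X\rangle,ш)/R$, $R$ the ideal generated by $x_0,x_1$ and $uш v-\iota(\iota^{-1}(u)*\iota^{-1}(v))$ for $u\in\mathbb Q\mathbf1+x_0\mathbb Q\langle\mathcal X\rangle x_1$, $v\in\mathbb Q\mathbf1+\mathbb Q\langle\mathcal X\rangle x_1$, with $\iota(y_{k_1}\cdots y_{k_d})=x_0^{k_1-1}x_1\cdots x_0^{k_d-1}x_1$ and $*$ the stuffle product on $\mathbb Q\langle y_1,y_2,\dots\rangle$ ($y_iu*y_jv=y_i(u*y_jv)+y_j(y_iu*v)+y_{i+j}(u*v)$). $\zeta^{\mathfrak f}(w)$ is the class of the word $w$, $\zeta^{\mathfrak f}(k_1,\dots,k_d)=\zeta^{\mathfrak f}(x_0^{k_1-1}x_1\cdots x_0^{k_d-1}x_1)$, $\{2\}^m$ denotes $m$ entries equal to $2$, $\zeta^{\mathfrak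 f}(\{2\}^0)=1$. *)

From mathcomp Require Import all_boot all_algebra.
Set Implicit Arguments. Unset Strict Implicit. Unset Printing Implicit Defensive.
Import GRing.Theory.
Local Open Scope ring_scope.

Definition word := seq bool.
Definition x0 : bool := false.
Definition x1 : bool := true.

(* Elements of Q<X> are represented by (unnormalized) finite formal sums
   of words with rational coefficients; two representations denote the
   same polynomial iff they have the same coefficient function. *)
Definition poly := seq (rat * word).
Definition coef (p : poly) (w : word) : rat := \sum_(t <- p | t.2 == w) t.1.
Definition peq (p q : poly) : Prop := forall w, coef p w = coef q w.
Definition padd (p q : poly) : poly := p ++ q.
Definition pscale (c : rat) (p : poly) : poly := [seq (c * t.1, t.2) | t <- p].
Definition pword (w : word) : poly := [:: (1, w)].
Definition psum (ps : seq poly) : poly := flatten ps.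

(* Shuffle of words (as a list of words, with multiplicity):
   1 ш w = w ш 1 = w, au ш bv = a(u ш bv) + b(au ш v). *)
Fixpoint shw {T : Type} (u v : seq T) : seq (seq T) :=
  match u with
  | [::] => [:: v]
  | a :: u' =>
    (fix shv (v : seq T) : seq (seq T) :=
       match v with
       | [::] => [:: u]
       | b :: v' => map (cons a) (shw u' v) ++ map (cons b) (shv v')
       end) v
  end.

Definition psh (p q : poly) : poly :=
  flatten [seq [seq (t.1 * s.1, w) | w <- shw t.2 s.2] | t <- p, s <- q].

(* Stuffle on words over Y = {y1, y2, ...}; the letter y_k is encoded as k. *)
Fixpoint stw (u v : seq nat) : seq (seq nat) :=
  match u with
  | [::] => [:: v]
  | i :: u' =>
    (fix stv (v : seq nat) : seq (seq nat) :=
       match v with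
       | [::] => [:: u]
       | j :: v' => map (cons i) (stw u' v) ++ map (cons j) (stv v')
                    ++ map (cons (i + j)%N) (stw u' v')
       end) v
  end.

Definition iotaX (s : seq nat) : word :=
  flatten [seq nseq k.-1 x0 ++ [:: x1] | k <- s].

(* inverse of iotaX on words in {1} u X* x1 *)
Fixpoint iotainv_aux (c : nat) (w : word) : seq nat :=
  match w with
  | [::] => [::]
  | b :: w' => if b then c.+1 :: iotainv_aux 0 w' else iotainv_aux c.+1 w'
  end.
Definition iotainv (w : word) : seq nat := iotainv_aux 0 w.

Definition pstuffle (p q : poly) : poly :=
  flatten [seq [seq (t.1 * s.1, iotaX z) | z <- stw (iotainv t.2) (iotainv s.2)]
          | t <- p, s <- q].

Definition adm0 (p : poly) : Prop :=
  forall w, coef p w != 0 -> (w == [::]) || ((head x1 w == x0) && (last x0 w == x1)).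
Definition adm1 (p : poly) : Prop :=
  forall w, coef p w != 0 -> (w == [::]) || (last x0 w == x1).

Definition isGen (g : poly) : Prop :=
  g = pword [:: x0] \/ g = pword [:: x1] \/
  exists u v, adm0 u /\ adm1 v /\ g = padd (psh u v) (pscale (-1) (pstuffle u v)).

Definition inR (p : poly) : Prop :=
  exists s : seq (poly * poly),
    (forall t, t \in s -> isGen t.2) /\
    peq p (flatten [seq psh t.1 t.2 | t <- s]).

(* equality of classes in Z^f = (Q<X>, ш)/R *)
Definition zeq (p q : poly) : Prop := inR (padd p (pscale (-1) q)).

Definition zetaf (ks : seq nat) : poly := pword (iotaX ks).

(* In Z^f the shuffle (x0 x1)^n ш x0 vanishes, since x0 lies in R.  Inserting x0 into
   (x0 x1)^n either appends it, or turns one factor x0 x1 into x0 x0 x1 from the left or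
   from the right of its x0; this gives (x0 x1)^n x0 + 2 sum_i zeta({2}^i, 3, {2}^(n-1-i)).
   For the second equality let T_k be the sum of the zeta({2}^a, 2k+1, {2}^b) with
   a + b = n - k (so T_(n+1) = 0).  The stuffle y_(2i+1) * y_2^(n-i) inserts 2i+1 among the
   2's or merges it with one of them, so the double shuffle relation reads
   zeta(2i+1) zeta({2}^(n-i)) = T_i + T_(i+1), and the alternating sum over i telescopes
   to -T_1. *)
From Pilot Require Import Defs.
From mathcomp Require Import all_boot all_algebra.
From mathcomp Require Import zify ring.

Lemma map_iotaS {T : Type} (F : nat -> T) m :
  map F (iota 0 m.+1) = F 0 :: map (F \o succn) (iota 0 m).
Proof. by have := iotaDl 1 0 m; rewrite addn0 /= => ->; rewrite -map_comp. Qed.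

Lemma iotaX_cons k s : iotaX (k :: s) = nseq k.-1 x0 ++ x1 :: iotaX s.
Proof. by rewrite /iotaX /= -catA. Qed.

Lemma iotaX_nseq2 n : iotaX (nseq n 2) = flatten (nseq n [:: x0; x1]).
Proof. by elim: n => //= n <-; rewrite iotaX_cons. Qed.

Lemma iotainv_aux_nseq0 c k w :
  iotainv_aux c (nseq k x0 ++ w) = iotainv_aux (c + k) w.
Proof. by elim: k c => [|k IH] c /=; rewrite ?addn0 // IH addnS. Qed.

Lemma iotaXK s : all (leq 1) s -> iotainv (iotaX s) = s.
Proof.
rewrite /iotainv; elim: s => //= k s IH /andP[k_gt0 s_gt0].
by rewrite iotaX_cons iotainv_aux_nseq0 /= add0n prednK // IH.
Qed.

Lemma last_iotaX s b : s != [::] -> last b (iotaX s) = x1.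
Proof.
elim: s b => // k s IH b _; rewrite iotaX_cons last_cat /=.
by case: s IH => // k' s' IH; apply: IH.
Qed.

Lemma head_iotaX k s b : (1 < k)%N -> head b (iotaX (k :: s)) = x0.
Proof. by case: k => [|[|k]] //; rewrite iotaX_cons. Qed.

Definition twos_around (k m a : nat) : seq nat := nseq a 2 ++ k :: nseq (m - a) 2.

(* The index sequences of T_k; empty for k > n, where n.+1 - k truncates to 0. *)
Definition odd_in_twos (n k : nat) : seq (seq nat) :=
  [seq twos_around k.*2.+1 (n - k) a | a <- iota 0 (n.+1 - k)].

Lemma stw1_cons k j v :
  stw [:: k] (j :: v) = [:: k :: j :: v] ++ map (cons j) (stw [:: k] v) ++ [:: (k + j) :: v].
Proof. by []. Qed.

Lemma perm_stw1_nseq2 k m :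
  perm_eq (stw [:: k] (nseq m 2))
    ([seq twos_around k m a | a <- iota 0 m.+1] ++
     [seq twos_around (k + 2) m.-1 a | a <- iota 0 m]).
Proof.
elim: m => [|m IH] //; rewrite [nseq _ _]/= stw1_cons.
have -> : [seq twos_around k m.+1 a | a <- iota 0 m.+2] =
    (k :: nseq m.+1 2) :: map (cons 2) [seq twos_around k m a | a <- iota 0 m.+1].
  by rewrite map_iotaS -map_comp; congr (_ :: _); apply: eq_map => a /=.
have -> : [seq twos_around (k + 2) m a | a <- iota 0 m.+1] =
    ((k + 2) :: nseq m 2) :: map (cons 2) [seq twos_around (k + 2) m.-1 a | a <- iota 0 m].
  rewrite map_iotaS -map_comp /twos_around subn0; congr (_ :: _); apply: eq_map => a /=.
  by rewrite subnS -subn1 subnAC subn1.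
have /permP IH2 := perm_map (cons 2) IH.
apply/permP => p; move: (IH2 p).
by rewrite map_cat /= !count_cat /= => ->; lia.
Qed.

Lemma perm_stw_odd_twos n i : (i <= n)%N ->
  perm_eq (stw [:: i.*2.+1] (nseq (n - i) 2)) (odd_in_twos n i ++ odd_in_twos n i.+1).
Proof.
move=> le_in; rewrite /odd_in_twos subSn // subSS subnS.
have -> : i.+1.*2.+1 = (i.*2.+1 + 2)%N by rewrite addn2 doubleS.
exact: perm_stw1_nseq2.
Qed.

Lemma shw_cons1 {T : Type} (a b : T) u :
  shw (a :: u) [:: b] = map (cons a) (shw u [:: b]) ++ [:: [:: b, a & u]].
Proof. by []. Qed.

Lemma perm_shw_iotaX2_x0 n :
  perm_eq (shw (iotaX (nseq n 2)) [:: x0])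
    ((iotaX (nseq n 2) ++ [:: x0]) ::
     [seq iotaX (twos_around 3%N n.-1 a) | a <- iota 0 n] ++
     [seq iotaX (twos_around 3%N n.-1 a) | a <- iota 0 n]).
Proof.
rewrite iotaX_nseq2; elim: n => [|n IH] //.
set P := flatten _.
set Z := [seq iotaX _ | a <- iota 0 n.+1].
have {P}-> : P = x0 :: x1 :: flatten (nseq n [:: x0; x1]) by [].
have -> : Z = (x0 :: x0 :: x1 :: flatten (nseq n [:: x0; x1])) ::
          [seq x0 :: x1 :: iotaX (twos_around 3%N n.-1 a) | a <- iota 0 n].
  rewrite /Z map_iotaS /twos_around /= iotaX_cons /= iotaX_nseq2 subn0.
  congr (_ :: _); apply: eq_map => a /=.
  by rewrite iotaX_cons /= subnS -subn1 subnAC subn1.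
have /permP IH2 := perm_map (fun w => [:: x0, x1 & w]) IH.
apply/permP => p; move: (IH2 p).
by rewrite !shw_cons1 /= !map_cat !count_cat /= !count_map /preim /= => ->; lia.
Qed.

Import GRing.Theory.
Local Open Scope ring_scope.

Lemma coef_nil w : coef [::] w = 0.
Proof. by rewrite /coef big_nil. Qed.

Lemma coef_cons c v p w : coef ((c, v) :: p) w = (if v == w then c else 0) + coef p w.
Proof. by rewrite /coef big_cons /=; case: (v == w); rewrite ?add0r. Qed.

Lemma coef_cat p q w : coef (p ++ q) w = coef p w + coef q w.
Proof. by rewrite /coef big_cat. Qed.

Lemma coef_scale c p w : coef (pscale c p) w = c * coef p w.
Proof.
elim: p => [|[a v] p IH]; first by rewrite !coef_nil mulr0.
by rewrite /= !coef_cons IH mulrDr; case: (v == w); rewrite ?mulr0.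
Qed.

Lemma coef_psum ps w : coef (psum ps) w = \sum_(p <- ps) coef p w.
Proof.
elim: ps => [|p ps IH]; first by rewrite big_nil coef_nil.
by rewrite big_cons /psum /= coef_cat -IH.
Qed.

Lemma coef_map_const {T : Type} (c : rat) (f : T -> word) (s : seq T) w :
  coef [seq (c, f x) | x <- s] w = c * (count (fun x => f x == w) s)%:R.
Proof.
elim: s => [|x s IH]; first by rewrite coef_nil mulr0.
rewrite /= coef_cons IH natrD mulrDr.
by case: (f x == w); rewrite ?mulr1 ?mulr0.
Qed.

Lemma coef_psum_pword {T : Type} (f : T -> word) (s : seq T) w :
  coef (psum [seq pword (f x) | x <- s]) w = (count (fun x => f x == w) s)%:R.
Proof.
have -> : psum [seq pword (f x) | x <- s] = [seq (1, f x) | x <- s].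
  by elim: s => //= x s <-.
by rewrite coef_map_const mul1r.
Qed.

Lemma psh_pword a b : psh (pword a) (pword b) = [seq (1, w) | w <- shw a b].
Proof. by rewrite /psh /= cats0 mul1r. Qed.

Lemma pstuffle_pword a b :
  pstuffle (pword a) (pword b) = [seq (1, iotaX z) | z <- stw (iotainv a) (iotainv b)].
Proof. by rewrite /pstuffle /= cats0 mul1r. Qed.

Lemma coef_psh_scale_unit c g w : coef (psh (pscale c (pword [::])) g) w = c * coef g w.
Proof.
rewrite /psh /= cats0 mulr1.
elim: g => [|[d v] g IH]; first by rewrite coef_nil mulr0.
by rewrite /= !coef_cons IH mulrDr; case: (v == w); rewrite ?mulr0.
Qed.

Lemma inR_peq p q : inR q -> peq p q -> inR p.
Proof. by move=> [s [gen_s q_s]] pq; exists s; split=> // w; rewrite pq q_s. Qed.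

Lemma inR_psh_gen p g : isGen g -> inR (psh p g).
Proof.
move=> gen_g; exists [:: (p, g)]; split; first by move=> t; rewrite inE => /eqP ->.
by move=> w; rewrite /= cats0.
Qed.

Lemma inR_lincomb {I : eqType} (s : seq I) (a : I -> rat) (g : I -> Defs.poly) :
  (forall i, i \in s -> isGen (g i)) -> inR (psum [seq pscale (a i) (g i) | i <- s]).
Proof.
move=> gen_g; exists [seq (pscale (a i) (pword [::]), g i) | i <- s]; split.
  by move=> t /mapP [i si ->]; apply: gen_g.
move=> w; rewrite -map_comp -[flatten _]/(psum _) !coef_psum !big_map.
by apply: eq_bigr => i _; rewrite coef_psh_scale_unit coef_scale.
Qed.

Lemma adm0_zetaf1 k : (1 < k)%N -> adm0 (zetaf [:: k]).
Proof.
move=> k_gt1 w; rewrite /zetaf /pword coef_cons coef_nil addr0.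
case: (iotaX _ =P w) => [<- _ | _]; last by rewrite eqxx.
by rewrite head_iotaX // last_iotaX // !eqxx orbT.
Qed.

Lemma adm1_zetaf s : adm1 (zetaf s).
Proof.
move=> w; rewrite /zetaf /pword coef_cons coef_nil addr0.
case: (iotaX _ =P w) => [<- _ | _]; last by rewrite eqxx.
by case: s => [|k s] //; rewrite last_iotaX // eqxx orbT.
Qed.

Lemma isGen_double_shuffle u v : adm0 u -> adm1 v ->
  isGen (padd (psh u v) (pscale (-1) (pstuffle u v))).
Proof. by move=> adm_u adm_v; right; right; exists u, v. Qed.

Lemma coef_pstuffle_odd_twos n i w : (i <= n)%N ->
  coef (pstuffle (zetaf [:: i.*2.+1]) (zetaf (nseq (n - i) 2%N))) w =
  (count (fun z => iotaX z == w) (odd_in_twos n i))%:R +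
  (count (fun z => iotaX z == w) (odd_in_twos n i.+1))%:R.
Proof.
move=> le_in; rewrite pstuffle_pword coef_map_const !iotaXK ?all_nseq ?orbT //.
by rewrite mul1r (permP (perm_stw_odd_twos n i le_in)) count_cat natrD.
Qed.

Lemma alternating_sum_telescope (c : nat -> rat) n : c n.+1 = 0 ->
  \sum_(i <- iota 1 n) (-1) ^+ i * (c i + c i.+1) = - c 1%N.
Proof.
move=> c_tail; have -> : iota 1 n = index_iota 1 n.+1 by rewrite /index_iota subSS subn0.
rewrite (telescope_sumr_eq (fun k => - (-1) ^+ k * c k)) // => [|k _].
  by rewrite c_tail; ring.
by rewrite exprS; ring.
Qed.

Lemma zeq_shuffle_x0 n :
  zeq (pword (iotaX (nseq n 2%N) ++ [:: x0]))
      (pscale (-2) (psum [seq zetaf (twos_around 3%N n.-1 i) | i <- iota 0 n])).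
Proof.
apply: (inR_peq _ _ (inR_psh_gen (pword (iotaX (nseq n 2%N))) (pword [:: x0]) (or_introl erefl))).
move=> w; rewrite psh_pword coef_map_const (permP (perm_shw_iotaX2_x0 n)).
rewrite coef_cat !coef_scale coef_psum_pword /pword coef_cons coef_nil.
by rewrite /= count_cat !count_map !natrD; case: (_ == w) => /=; ring.
Qed.

Lemma zeq_double_shuffle_sum n :
  zeq (pscale (-2) (psum [seq zetaf (twos_around 3%N n.-1 i) | i <- iota 0 n]))
      (pscale 2 (psum [seq pscale ((-1) ^+ i)
                             (psh (zetaf [:: i.*2.+1]) (zetaf (nseq (n - i) 2%N)))
                      | i <- iota 1 n])).
Proof.
pose u i := zetaf [:: i.*2.+1].
pose v i := zetaf (nseq (n - i) 2%N).
pose g i := padd (psh (u i) (v i)) (pscale (-1) (pstuffle (u i) (v i))).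
have gen_g i : i \in iota 1 n -> isGen (g i).
  rewrite mem_iota => /andP[i_gt0 _].
  by apply: isGen_double_shuffle; [apply: adm0_zetaf1; case: i i_gt0 | apply: adm1_zetaf].
apply: (inR_peq _ _ (inR_lincomb _ (fun i => -2 * (-1) ^+ i) _ gen_g)) => w.
set c := fun k => (count (fun z => iotaX z == w) (odd_in_twos n k))%:R : rat.
have c_head : coef (psum [seq zetaf (twos_around 3%N n.-1 i) | i <- iota 0 n]) w = c 1%N.
  by rewrite coef_psum_pword /c /odd_in_twos count_map subSS subn0 subn1.
have c_tail : c n.+1 = 0 by rewrite /c /odd_in_twos subnn.
have summand i : i \in iota 1 n ->
    coef (pscale (-2 * (-1) ^+ i) (g i)) w =
    -2 * coef (pscale ((-1) ^+ i) (psh (u i) (v i))) w + 2 * ((-1) ^+ i * (c i + c i.+1)).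
  rewrite mem_iota add1n ltnS => /andP[_ le_in].
  by rewrite /g /padd coef_scale coef_cat !coef_scale coef_pstuffle_odd_twos //; ring.
rewrite /padd coef_cat !coef_scale c_head !coef_psum !big_map (eq_big_seq _ summand).
by rewrite big_split -!mulr_sumr /= alternating_sum_telescope //; ring.
Qed.

Theorem mainTheorem11 (n : nat) (hn : (1 <= n)%N) :
  zeq (pword (flatten (nseq n [:: x0; x1]) ++ [:: x0]))
      (pscale (-2) (psum [seq zetaf (nseq i 2%N ++ 3%N :: nseq (n.-1 - i) 2%N)
                         | i <- iota 0 n]))
  /\
  zeq (pscale (-2) (psum [seq zetaf (nseq i 2%N ++ 3%N :: nseq (n.-1 - i) 2%N)
                         | i <- iota 0 n]))
      (pscale 2 (psum [seq pscale ((-1) ^+ i)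
                             (psh (zetaf [:: i.*2.+1]) (zetaf (nseq (n - i) 2%N)))
                      | i <- iota 1 n])).
Proof.
split; last exact: zeq_double_shuffle_sum.
by rewrite -iotaX_nseq2; apply: zeq_shuffle_x0.
Qed.
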